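(* Let $X$ and $Y$ be spaces. If $X$ is strongly $Y$-selective, then every subspace of $X$ is strongly $Y$-selective; if $X$ is $Y$-selective, then every closed subspace of $X$ is $Y$-selective.
   Context: All spaces are assumed $T_1$. For spaces $Y$, $X$, a map $\varphi:Y\to\mathcal P(X)\setminus\{\emptyset\}$ is lower semicontinuous (l.s.c.) if $\{y:\varphi(y)\cap U\neq\emptyset\}$ is open in $Y$ for every open $U\subseteq X$; a selection is a map $f:Y\to X$ with $f(y)\in\varphi(y)$ for all $y$. $X$ is strongly $Y$-selective if every l.s.c. map $Y\to\mathcal P(X)\setminus\{\emptyset\}$ has a continuous selection, and $Y$-selective if every l.s.c. map from $Y$ to the nonempty closed subsets of $X$ has a continuous selection. *)

From HB Require Import structures.
From mathcomp Require Import all_boot all_order all_algebra.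
From mathcomp Require Import all_classical all_reals all_analysis.
Set Implicit Arguments. Unset Strict Implicit. Unset Printing Implicit Defensive.
Local Open Scope classical_set_scope.

Definition lsc {Y X : topologicalType} (phi : Y -> set X) : Prop :=
  forall U : set X, open U -> open [set y | phi y `&` U !=set0].

Definition is_selection {Y X : Type} (phi : Y -> set X) (f : Y -> X) : Prop :=
  forall y, phi y (f y).

Definition strongly_selective (X Y : topologicalType) : Prop :=
  forall phi : Y -> set X, (forall y, phi y !=set0) -> lsc phi ->
    exists f : Y -> X, continuous f /\ is_selection phi f.

Definition selective (X Y : topologicalType) : Prop :=
  forall phi : Y -> set X, (forall y, phi y !=set0) ->
    (forall y, closed (phi y)) -> lsc phi ->
    exists f : Y -> X, continuous f /\ is_selection phi f.

From HB Require Import structures.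
From mathcomp Require Import all_boot all_order all_algebra.
From mathcomp Require Import all_classical all_reals all_analysis.
Local Open Scope classical_set_scope.

(* A set-valued map phi into a subspace A of X may be read as a map into X.
   It stays lower semicontinuous, since the open sets of A are the traces of
   open sets of X, and its values stay closed when A is closed. A continuous
   selection of the map read in X takes its values in A, so it corestricts to
   a continuous selection of phi. No separation axiom is needed. *)

Section subspace_selection.
Context {X Y : topologicalType} {A : set X}.

Definition val_map (phi : Y -> set (set_type A)) (y : Y) : set X :=
  set_val @` phi y.

Lemma lsc_val_map (phi : Y -> set (set_type A)) : lsc phi -> lsc (val_map phi).
Proof.
move=> lsc_phi U oU; have := lsc_phi (set_val @^-1` U) (ex_intro2 _ _ U oU erefl).
congr open; apply/seteqP; split => y /=.
- by move=> [a [phi_a Ua]]; exists (set_val a); split => //; exists a.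
- by move=> [_ [[a phi_a <-] Ua]]; exists a.
Qed.

Lemma closed_image_set_val (F : set (set_type A)) :
  closed A -> closed F -> closed (set_val @` F).
Proof.
move=> cA /closed_openC [V oV V_F].
suff -> : set_val @` F = A `&` ~` V by apply: closedI => //; exact: open_closedC.
apply/seteqP; split => [_ [[x Ax] Fx <-]|x [Ax nVx]].
- split; first exact/set_mem.
  by move=> Vx; have : (set_val @^-1` V) (exist _ x Ax) by []; rewrite V_F.
- exists (exist _ x (mem_set Ax)) => //; apply: contrapT => nFx.
  by have : (set_val @^-1` V) (exist _ x (mem_set Ax)) by rewrite V_F.
Qed.

Lemma corestrict_selection (phi : Y -> set (set_type A)) (f : Y -> X) :
  continuous f -> is_selection (val_map phi) f ->
  exists g : Y -> set_type A, continuous g /\ is_selection phi g.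
Proof.
move=> cf sel_f.
have fA y : f y \in A by have [[x Ax] _ <-] := sel_f y.
exists (fun y => exist _ (f y) (fA y)); split.
- exact: continuous_comp_initial.
- move=> y; have [a phi_a fy_a] := sel_f y.
  by rewrite (_ : exist _ _ _ = a) //; apply: val_inj.
Qed.

End subspace_selection.

Theorem mainTheorem8 (X Y : topologicalType)
  (hX : accessible_space X) (hY : accessible_space Y) :
  (strongly_selective X Y ->
     forall A : set X, strongly_selective (set_type A) Y) /\
  (selective X Y ->
     forall A : set X, closed A -> selective (set_type A) Y).
Proof.
split=> [sel_X A phi ne lsc_phi | sel_X A cA phi ne cphi lsc_phi].
- have [f [cf sel_f]] := sel_X _ (fun y => image_nonempty _ (ne y))
    (lsc_val_map _ lsc_phi).
  exact: corestrict_selection sel_f.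
- have [f [cf sel_f]] := sel_X _ (fun y => image_nonempty _ (ne y))
    (fun y => closed_image_set_val _ cA (cphi y)) (lsc_val_map _ lsc_phi).
  exact: corestrict_selection sel_f.
Qed.
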